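(* Assume that $a(\cdot)\in B^q_\theta$ for $0<\theta\leq\frac{\pi}{2}$ and let $F\in\mathcal{L}(D(\mathbb{A}),X)$ be $p$-admissible for $\mathbb{A}$, with admissibility constant $\gamma=\gamma(\alpha)$, i.e. $\int_0^\alpha\|F\mathbb{T}(t)x\|^p\,dt\le\gamma^p\|x\|^p$ for $x\in D(\mathbb{A})$. Then \begin{align*} \int^\alpha_0 \left\|\mathscr{P}\mathscr{T}(t)\begin{pmatrix} x\\ f\end{pmatrix}\right\|^p dt\le 2^{p-1}\left( \|a\|_{B_{\theta}^q}^p\gamma^p \|x\|^p_X+\int^\alpha_0\|f(t)\|^p dt\right) \end{align*} for all $\alpha>0$ and $\begin{pmatrix} x\\ f\end{pmatrix}\in D(\mathscr{A})$.
   Context: $X$ is a Banach space, $p\in(1,\infty)$, $q\in(1,\infty)$, and $\mathbb{A}:D(\mathbb{A})\subset X\to X$ generates a $C_0$-semigroup $\mathbb{T}=(\mathbb{T}(t))_{t\ge0}$ on $X$; $a$ is a scalar function. For $0<\theta\le\pi/2$, $\Sigma_\theta=\{\lambda\in\mathbb{C}:|\arg\lambda|<\theta\}$ and $B^q_{\theta,X}$ is the Bergman space of holomorphic $f:\Sigma_\theta\to X$ with $\|f\|_{B^q_{\theta,X}}=(\int_{\Sigma_\theta}\|f(\tau+i\sigma)\|_X^q\,d\tau\,d\sigma)^{1/q}<\infty$; $B^q_\theta:=B^q_{\theta,\mathbb{C}}$. The state space is $\mathscr{X}^q=X\times B^q_{\theta,X}$ with norm $\|x\|_X+\|f\|_{B^q_{\theta,X}}$.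 $\Upsilon x:=a(\cdot)Fx$ for $x\in D(\mathbb{A})$. $\mathscr{A}=\mathrm{diag}(\mathbb{A},\frac{d}{dz})$ with $D(\mathscr{A})=D(\mathbb{A})\times D(\frac{d}{dz})$, generating $\mathscr{T}(t)=\mathrm{diag}(\mathbb{T}(t),\mathbb{S}(t))$ where $(\mathbb{S}(t)f)(s)=f(t+s)$ is the left shift semigroup; $\mathscr{P}=\begin{pmatrix}0&\delta_0\\ \Upsilon&0\end{pmatrix}$ with $D(\mathscr{P})=D(\mathscr{A})$, $\delta_0 f=f(0)$. *)

From HB Require Import structures.
From mathcomp Require Import all_boot all_order all_algebra.
From mathcomp Require Import all_classical all_reals all_analysis.
From mathcomp Require Export complex.
Import Order.TTheory GRing.Theory Num.Theory.
Import numFieldNormedType.Exports.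

Set Implicit Arguments.
Unset Strict Implicit.
Unset Printing Implicit Defensive.

Local Open Scope classical_set_scope.
Local Open Scope ring_scope.
Local Open Scope complex_scope.

(* The complex plane R[i], with its canonical normed (hence topological)
   structure as a normed module over itself. *)
Notation Cx R := ((complex R)^o).

Section Defs.
Variable R : realType.

(* real-valued norm of a normed R[i]-module (the library norm is R[i]-valued,
   with nonnegative real values) *)
Definition rnorm (V : normedModType R[i]) (v : V) : R := complex.Re `|v|.

Definition sector (th : R) : set (Cx R) :=
  [set z | exists r phi : R,
      0 < r /\ `|phi| < th /\ z = (r * cos phi) +i* (r * sin phi)].

Definition cdiffquot (V : normedModType R[i]) (g : Cx R -> V) (z : Cx R) :=
  fun h : Cx R => h^-1 *: (g (z + h) - g z).

Definition holomorphic_on (V : normedModType R[i]) (U : set (Cx R))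
  (g : Cx R -> V) : Prop :=
  forall z, U z -> exists l : V, cdiffquot g z @ dnbhs (0 : Cx R) --> l.

Definition bergman_int (V : normedModType R[i]) (th q : R) (g : Cx R -> V)
  : \bar R :=
  (\int[(@lebesgue_measure R) \x (@lebesgue_measure R)]_(w in
      [set w : R * R | sector th (w.1 +i* w.2)])
     ((rnorm (g (w.1 +i* w.2))) `^ q)%:E)%E.

Definition in_bergman (V : normedModType R[i]) (th q : R) (g : Cx R -> V)
  : Prop :=
  holomorphic_on (sector th) g /\ (bergman_int th q g < +oo)%E.

Definition bnorm (V : normedModType R[i]) (th q : R) (g : Cx R -> V) : R :=
  (fine (bergman_int th q g)) `^ (q^-1).

Definition shift (V : normedModType R[i]) (t : R) (f : Cx R -> V) :=
  fun s : Cx R => f (t%:C + s).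

Definition in_dom_ddz (V : normedModType R[i]) (th q : R) (f : Cx R -> V)
  : Prop :=
  in_bergman th q f /\
  exists g : Cx R -> V, in_bergman th q g /\
    (fun h : R => bnorm th q
        (fun z => (h%:C)^-1 *: (shift h f z - f z) - g z)) @ at_right 0
      --> (0 : R).

Definition C0_semigroup (X : normedModType R[i]) (T : R -> X -> X) : Prop :=
  [/\ (forall t (c : R[i]) (x y : X), 0 <= t ->
          T t (c *: x + y) = c *: T t x + T t y),
      (forall t, 0 <= t -> exists M : R, forall x, rnorm (T t x) <= M * rnorm x),
      (forall x, T 0 x = x),
      (forall t s x, 0 <= t -> 0 <= s -> T (t + s) x = T t (T s x)) &
      (forall x, (fun t => T t x) @ at_right 0 --> x)].

Definition generator (X : normedModType R[i]) (T : R -> X -> X)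
  (DA : set X) (A : X -> X) : Prop :=
  (forall x, DA x <->
     exists y : X, (fun h : R => (h%:C)^-1 *: (T h x - x)) @ at_right 0 --> y)
  /\ (forall x, DA x ->
     (fun h : R => (h%:C)^-1 *: (T h x - x)) @ at_right 0 --> A x).

Definition bounded_on_graph (X : normedModType R[i]) (DA : set X)
  (A F : X -> X) : Prop :=
  (forall (c : R[i]) x y, DA x -> DA y -> F (c *: x + y) = c *: F x + F y)
  /\ exists K : R, forall x, DA x -> rnorm (F x) <= K * (rnorm x + rnorm (A x)).

Definition st_norm (X : normedModType R[i]) (th q : R)
  (u : X * (Cx R -> X)) : R := rnorm u.1 + bnorm th q u.2.

Definition Tcal (X : normedModType R[i]) (T : R -> X -> X) (t : R)
  (u : X * (Cx R -> X)) : X * (Cx R -> X) := (T t u.1, shift t u.2).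

(* scriptP = [[0, delta_0], [Upsilon, 0]],  Upsilon x = a(.) F x *)
Definition Pcal (X : normedModType R[i]) (a : Cx R -> Cx R) (F : X -> X)
  (u : X * (Cx R -> X)) : X * (Cx R -> X) :=
  (u.2 0, fun z => a z *: F u.1).

End Defs.

(* The estimate holds pointwise in t.  The first component of P T(t)(x, f) is
   f(t) and the second is a(.) F T(t) x, whose Bergman norm is at most
   ||a||_B ||F T(t) x||; then (u + v)^p <= 2^(p-1) (u^p + v^p) by convexity of
   s |-> s^p, and integrating over [0, alpha] with the admissibility of F gives
   the claim.  Since t |-> ||F T(t) x|| need not be measurable, integrals are
   handled through their definition as suprema over nonnegative simple
   functions; the only measurability used, that of t |-> ||f(t)||, comes from
   the continuity of the holomorphic f on the positive real axis. *)
From Pilot Require Import Defs.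
From HB Require Import structures.
From mathcomp Require Import all_boot all_order all_algebra.
From mathcomp Require Import all_classical all_reals all_analysis.
From mathcomp Require Import complex.
From mathcomp Require Import lra measurable_realfun.
Import Order.TTheory GRing.Theory Num.Theory.
Import numFieldNormedType.Exports.
Local Open Scope classical_set_scope.
Local Open Scope ring_scope.
Local Open Scope complex_scope.

Section ge0_integral_nonmeasurable.
Context {d : measure_display} {T : measurableType d} {R : realType}.
Variable mu : {measure set T -> \bar R}.
Import HBNNSimple.
Local Open Scope ereal_scope.

Lemma le_ge0_integral (D : set T) (f g : T -> \bar R) :
  (forall x, D x -> 0 <= f x) -> (forall x, D x -> f x <= g x) ->
  \int[mu]_(x in D) f x <= \int[mu]_(x in D) g x.
Proof.
move=> f0 fg.
have g0 x : D x -> 0 <= g x by move=> Dx; exact: le_trans (f0 _ Dx) (fg _ Dx).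
rewrite !ge0_integralE //.
apply: ge_ereal_sup => _ [h /= hf <-]; apply: ereal_sup_ubound => /=.
exists h => //= x; apply: (le_trans (hf x)).
by rewrite /patch; case: ifP => // /[!inE] /fg.
Qed.

Lemma ge0_integralZl_le (D : set T) (k : R) (f : T -> R) : (0 <= k)%R ->
  (forall x, D x -> 0 <= f x)%R ->
  \int[mu]_(x in D) (k * f x)%:E <= k%:E * \int[mu]_(x in D) (f x)%:E.
Proof.
move=> k0 f0; have [->|kn0] := eqVneq k 0%R.
  rewrite mul0e (eq_integral (fun _ => 0)) ?integral0 // => x _.
  by rewrite mul0r.
have kp : (0 < k)%R by rewrite lt_def kn0.
rewrite !ge0_integralE //; last by move=> x Dx; rewrite lee_fin mulr_ge0 ?f0.
apply: ge_ereal_sup => _ [h /= hf <-].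
have ki : (0 <= k^-1)%R by rewrite invr_ge0.
pose h' := scale_nnsfun h ki.
have -> : sintegral mu h = k%:E * sintegral mu h'.
  rewrite -sintegralrM; apply: eq_sintegral => x.
  by rewrite /h' /= mulrA mulfV ?mul1r.
apply: lee_wpmul2l; first by rewrite lee_fin.
apply: ereal_sup_ubound => /=; exists h' => //= x.
have := hf x; rewrite /patch; case: ifP => _; rewrite lee_fin => hx.
  by rewrite lee_fin ler_pdivrMl.
by rewrite lee_fin pmulr_rle0 ?invr_gt0.
Qed.

(* Given a simple s <= g + h, split it as (s - g)^+ + g: the measurable g is
   integrated exactly, and (s - g)^+ <= h is measurable. *)
Lemma ge0_integralD_le (D : set T) (mD : measurable D) (g h : T -> R) :
  measurable_fun D g -> (forall x, D x -> 0 <= g x)%R ->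
  (forall x, D x -> 0 <= h x)%R ->
  \int[mu]_(x in D) (g x + h x)%:E <=
  \int[mu]_(x in D) (g x)%:E + \int[mu]_(x in D) (h x)%:E.
Proof.
move=> mg g0 h0.
rewrite [X in _ <= X + _]integral_mkcond [X in _ <= _ + X]integral_mkcond.
rewrite !restrict_EFin ge0_integralE; last first.
  by move=> x Dx; rewrite lee_fin addr_ge0 ?g0 ?h0.
apply: ge_ereal_sup => _ [s /= hs <-].
set gD := g \_ D; set hD := h \_ D.
pose k x := Order.max (s x - gD x)%R 0%R.
have mgD : measurable_fun setT gD by apply/(measurable_restrictT _ mD).
have mk : measurable_fun setT k.
  apply: (measurable_maxr (f := fun x => (s x - gD x)%R) (g := cst 0%R)) => //.
  exact: measurable_funB.
have gD0 x : (0 <= gD x)%R by rewrite /gD /patch; case: ifP => // /[!inE] /g0.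
have k0 x : (0 <= k x)%R by rewrite /k le_max lexx orbT.
have -> : sintegral mu s = \int[mu]_x (s x)%:E.
  by rewrite integral_nnsfun // patch_setT.
apply: (@le_trans _ _ (\int[mu]_x ((gD x)%:E + (k x)%:E))).
  apply: ge0_le_integral => //.
  - by move=> x _; rewrite lee_fin.
  - exact/measurable_EFinP.
  - by apply: emeasurable_funD; exact/measurable_EFinP.
  - by move=> x _; rewrite -EFinD lee_fin -lerBlDl /k le_max lexx.
rewrite ge0_integralD //; try (by move=> x _; rewrite lee_fin);
  try exact/measurable_EFinP.
apply: leeD => //; apply: le_ge0_integral => x _; first by rewrite lee_fin.
have := hs x; rewrite /k /gD /hD /patch; case: ifP => Dx; rewrite !lee_fin.
  by rewrite ge_max lerBlDl => ->; rewrite h0 //; rewrite inE in Dx.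
by rewrite ge_max subr0 lexx andbT.
Qed.

Lemma ge0_integral_combination_le (D : set T) (mD : measurable D)
    (g h : T -> R) (k c : R) :
  (0 <= k)%R -> (0 <= c)%R -> measurable_fun D g ->
  (forall x, D x -> 0 <= g x)%R -> (forall x, D x -> 0 <= h x)%R ->
  \int[mu]_(x in D) (k * (g x + c * h x))%:E <=
  k%:E * (\int[mu]_(x in D) (g x)%:E + c%:E * \int[mu]_(x in D) (h x)%:E).
Proof.
move=> k0 c0 mg g0 h0.
have ch0 x : D x -> (0 <= c * h x)%R by move=> Dx; rewrite mulr_ge0 ?h0.
apply: le_trans.
  by apply: ge0_integralZl_le => // x Dx; rewrite addr_ge0 ?g0 ?ch0.
apply: lee_wpmul2l; first by rewrite lee_fin.
apply: le_trans; first exact: ge0_integralD_le.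
by apply: leeD => //; exact: ge0_integralZl_le.
Qed.

End ge0_integral_nonmeasurable.

Section rnorm.
Context {R : realType}.

Lemma normc_rnorm {V : normedModType R[i]} (v : V) : `|v| = (rnorm v)%:C.
Proof.
by rewrite /rnorm; have := ger0_Im (normr_ge0 v); case: `|v| => a b /= ->.
Qed.

Lemma rnorm_ge0 {V : normedModType R[i]} (v : V) : 0 <= rnorm v.
Proof. by rewrite -ler0c -normc_rnorm. Qed.

Lemma rnormZ {V : normedModType R[i]} (c : R[i]) (v : V) :
  rnorm (c *: v) = rnorm (c : Cx R) * rnorm v.
Proof.
rewrite {1}/rnorm normrZ (normc_rnorm v).
by rewrite [`|c|](normc_rnorm (c : Cx R)) /= mulr0 subr0.
Qed.

Lemma ler_rnormD {V : normedModType R[i]} (v w : V) :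
  rnorm (v + w) <= rnorm v + rnorm w.
Proof. by rewrite -lecR rmorphD /= -!normc_rnorm ler_normD. Qed.

Lemma ler_rnorm_dist {V : normedModType R[i]} (v w : V) :
  `|rnorm v - rnorm w| <= rnorm (v - w).
Proof.
have := ler_rnormD (w - v) v; have := ler_rnormD (v - w) w.
rewrite !subrK [rnorm (w - v)]/rnorm -normrN opprB -/(rnorm (v - w)).
by rewrite ler_norml; lra.
Qed.

End rnorm.

Lemma powR_addr_le (R : realType) (x y p : R) : 1 <= p -> 0 <= x -> 0 <= y ->
  (x + y) `^ p <= 2 `^ (p - 1) * (x `^ p + y `^ p).
Proof.
move=> p1 x0 y0.
have half_ge0 : (0 : R) <= 2^-1 by rewrite invr_ge0.
have half_le1 : (2^-1 : R) <= 1 by rewrite invf_le1 ?ler1n.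
have x2_ge0 : 2 * x \in `[0, +oo[%classic by rewrite inE /= in_itv /= mulr_ge0.
have y2_ge0 : 2 * y \in `[0, +oo[%classic by rewrite inE /= in_itv /= mulr_ge0.
have midpoint : (2^-1 * (2 * x) + (1 - 2^-1) * (2 * y)) `^ p <=
                2^-1 * (2 * x) `^ p + (1 - 2^-1) * (2 * y) `^ p :=
  @convex_powR R p p1 (Itv01 half_ge0 half_le1) _ _ x2_ge0 y2_ge0.
have onem_half : 1 - 2^-1 = 2^-1 :> R by rewrite {1}(splitr 1) div1r addrK.
move: midpoint; rewrite onem_half !mulrA mulVf ?pnatr_eq0 // !mul1r.
move=> /le_trans; apply.
rewrite !powRM // !mulrA -mulrDr -powR_inv1 // -powRD ?pnatr_eq0 ?implybT //.
by rewrite addrC.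
Qed.

Lemma bergman_int_ge0 (R : realType) (V : normedModType R[i]) (th q : R)
  (g : Cx R -> V) : (0 <= bergman_int th q g)%E.
Proof. by apply: integral_ge0 => ? _; rewrite lee_fin powR_ge0. Qed.

Section bergman.
Variables (R : realType) (V : normedModType R[i]) (th q : R).
Variables (a : Cx R -> Cx R) (w : V).
Hypotheses (q_gt0 : 0 < q) (a_fin : (bergman_int th q a < +oo)%E).

Lemma bergman_intZ_le :
  (bergman_int th q (fun z => a z *: w) <=
   (rnorm w `^ q)%:E * bergman_int th q a)%E.
Proof.
rewrite /bergman_int.
under eq_integral => z _ do rewrite rnormZ powRM ?rnorm_ge0 // mulrC.
by apply: ge0_integralZl_le => [|? _]; exact: powR_ge0.
Qed.

Lemma bnormZ_le : bnorm th q (fun z => a z *: w) <= bnorm th q a * rnorm w.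
Proof.
have a_fin_num : bergman_int th q a \is a fin_num.
  by rewrite ge0_fin_numE ?bergman_int_ge0.
have aw_fin_num : bergman_int th q (fun z => a z *: w) \is a fin_num.
  rewrite ge0_fin_numE ?bergman_int_ge0 //.
  apply: le_lt_trans bergman_intZ_le _.
  by rewrite -(fineK a_fin_num) -EFinM ltry.
have aw_le : fine (bergman_int th q (fun z => a z *: w)) <=
             rnorm w `^ q * fine (bergman_int th q a).
  by rewrite -lee_fin fineK // EFinM fineK // bergman_intZ_le.
rewrite /bnorm; apply: le_trans (ge0_ler_powR _ _ _ aw_le) _.
- by rewrite invr_ge0 ltW.
- by rewrite nnegrE fine_ge0 ?bergman_int_ge0.
- by rewrite nnegrE mulr_ge0 ?powR_ge0 ?fine_ge0 ?bergman_int_ge0.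
rewrite powRM ?powR_ge0 ?fine_ge0 ?bergman_int_ge0 // -powRrM.
by rewrite mulfV ?gt_eqF // powRr1 ?rnorm_ge0 // mulrC.
Qed.

End bergman.

Lemma st_norm_Pcal_le {R : realType} {X : normedModType R[i]} (th q : R)
    (a : Cx R -> Cx R) (F : X -> X) (u : X * (Cx R -> X)) :
  0 < q -> (bergman_int th q a < +oo)%E ->
  st_norm th q (Pcal a F u) <= rnorm (u.2 0) + bnorm th q a * rnorm (F u.1).
Proof. by move=> q0 a_fin; rewrite lerD2l; exact: bnormZ_le. Qed.

Lemma st_norm_PcalTcal_powR_le (R : realType) (X : normedModType R[i])
    (th q p : R) (a : Cx R -> Cx R) (F : X -> X) (T : R -> X -> X) (t : R)
    (x : X) (f : Cx R -> X) :
  0 < q -> 1 <= p -> (bergman_int th q a < +oo)%E ->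
  st_norm th q (Pcal a F (Tcal T t (x, f))) `^ p <=
  2 `^ (p - 1) *
    (rnorm (f t%:C) `^ p + bnorm th q a `^ p * rnorm (F (T t x)) `^ p).
Proof.
move=> q0 p1 a_fin; have := st_norm_Pcal_le th q a F (Tcal T t (x, f)) q0 a_fin.
rewrite /= /Defs.shift addr0 => Pcal_le.
apply: le_trans (ge0_ler_powR _ _ _ Pcal_le) _.
- exact: le_trans ler01 p1.
- by rewrite nnegrE addr_ge0 ?rnorm_ge0 ?powR_ge0.
- by rewrite nnegrE addr_ge0 ?mulr_ge0 ?rnorm_ge0 ?powR_ge0.
rewrite -powRM ?rnorm_ge0 ?powR_ge0 //.
by rewrite powR_addr_le ?mulr_ge0 ?rnorm_ge0 ?powR_ge0.
Qed.

Section continuity_on_real_axis.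
Variables (R : realType) (V : normedModType R[i]).

Lemma normc_real (x : R) : `|(x%:C : R[i])| = `|x|%:C.
Proof. by rewrite normc_def /= expr0n /= addr0 sqrtr_sqr. Qed.

Lemma cvg_real_complex_sub (t0 : R) :
  (fun t : R => ((t - t0)%:C : Cx R)) @ t0 --> (0 : Cx R).
Proof.
apply/cvgrPdist_lt => e; rewrite ltcE => /andP[/eqP Im_e Re_e_gt0].
have -> : e = (complex.Re e)%:C by case: e Im_e {Re_e_gt0} => ? ? /= ->.
near=> t; rewrite sub0r normrN normc_real ltcR distrC.
by near: t; exact: (cvgrPdist_lt _ _).1 cvg_id _ Re_e_gt0.
Unshelve. all: by end_near.
Qed.

Lemma cdiffquot_cvg_shift (g : Cx R -> V) (z0 : Cx R) :
  (exists l : V, cdiffquot g z0 @ (0 : Cx R)^' --> l) ->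
  (fun h : Cx R => g (z0 + h)) @ (0 : Cx R) --> g z0.
Proof.
move=> [l dg].
pose G h := g z0 + h *: cdiffquot g z0 h.
have -> : (fun h => g (z0 + h)) = G.
  apply/funext => h; rewrite /G /cdiffquot; have [->|h0] := eqVneq h 0.
    by rewrite scale0r !addr0.
  by rewrite scalerA mulfV // scale1r [RHS]addrC subrK.
have G0 : G 0 = g z0 by rewrite /G scale0r addr0.
rewrite -G0; apply: (continuous_withinNx G 0).2.
rewrite G0 -[X in _ --> X]addr0.
apply: cvgD; first exact: cvg_cst.
by rewrite -(scale0r l); apply: cvgZ => //; exact: nbhs_dnbhs.
Qed.

Lemma continuous_rnorm_real_axis (g : Cx R -> V) (t0 : R) :
  (exists l : V, cdiffquot g t0%:C @ (0 : Cx R)^' --> l) ->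
  {for t0, continuous (fun t : R => rnorm (g t%:C))}.
Proof.
move=> dg; apply/cvgrPdist_lt => e e0.
have e0C : (0 : R[i]) < e%:C by rewrite ltcR.
have near_shift := (cvgrPdist_lt _ _).1 (cdiffquot_cvg_shift _ _ dg) _ e0C.
have near_g : \forall t \near t0, `|g t0%:C - g (t0%:C + (t - t0)%:C)| < e%:C :=
  cvg_real_complex_sub t0 _ (near_shift _).
near=> t; apply: le_lt_trans (ler_rnorm_dist _ _) _.
rewrite -ltcR -normc_rnorm -[s in _ - g s%:C](subrKC t0) rmorphD /=.
by near: t; exact: near_g.
Unshelve. all: by end_near.
Qed.

Lemma measurable_rnorm_real_axis (g : Cx R -> V) (th alpha p : R) :
  0 < th -> holomorphic_on (sector th) g ->
  measurable_fun [set` `[0, alpha]] (fun t : R => rnorm (g t%:C) `^ p).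
Proof.
move=> th0 hol; apply: (measurableT_comp (measurable_powR p)) => //.
apply: (measurable_funS (E := [set 0] `|` `]0, alpha + 1[)).
- by apply: measurableU; [exact: measurable_set1|exact: measurable_itv].
- move=> t /=; rewrite in_itv /= => /andP[t0 ta].
  have [->|tn0] := eqVneq t 0; [by left|right].
  by rewrite /= in_itv /= lt_def tn0 t0 (le_lt_trans ta) ?ltrDl.
apply/(measurable_funU _ (measurable_set1 0) (measurable_itv _)); split.
  exact: measurable_fun_set1.
apply: open_continuous_measurable_fun; first exact: itv_open.
move=> t; rewrite inE /= in_itv /= => /andP[t0 _].
apply: continuous_rnorm_real_axis; apply: hol.
exists t, 0; split => //; split; first by rewrite normr0.
by rewrite cos0 sin0 mulr1 mulr0.
Qed.

End continuity_on_real_axis.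

Theorem lemma3p4 (R : realType) (X : completeNormedModType R[i])
  (p q th : R) (T : R -> X -> X) (DA : set X) (A F : X -> X)
  (a : Cx R -> Cx R) :
  1 < p -> 1 < q -> 0 < th -> th <= pi / 2 ->
  C0_semigroup T -> generator T DA A ->
  in_bergman th q a -> bounded_on_graph DA A F ->
  forall alpha gamma : R, 0 < alpha -> 0 <= gamma ->
  (forall x, DA x ->
     (\int[@lebesgue_measure R]_(t in [set` `[0%R, alpha]%R])
        ((rnorm (F (T t x))) `^ p)%:E
      <= (gamma `^ p * rnorm x `^ p)%:E)%E) ->
  forall (x : X) (f : Cx R -> X), DA x -> in_dom_ddz th q f ->
  (\int[@lebesgue_measure R]_(t in [set` `[0%R, alpha]%R])
      ((st_norm th q (Pcal a F (Tcal T t (x, f)))) `^ p)%:E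
   <= (2 `^ (p - 1))%:E *
      ((bnorm th q a `^ p * gamma `^ p * rnorm x `^ p)%:E
       + \int[@lebesgue_measure R]_(t in [set` `[0%R, alpha]%R])
           ((rnorm (f t%:C)) `^ p)%:E))%E.
Proof.
move=> p1 q1 th0 _ _ _ [_ a_fin] _ alpha gamma _ _ admF x f Dx [[hol_f _] _].
have q0 : 0 < q by exact: lt_trans q1.
set b := bnorm th q a; set D := [set` `[0%R, alpha]%R].
have integrand_le : (\int[lebesgue_measure]_(t in D)
      (st_norm th q (Pcal a F (Tcal T t (x, f))) `^ p)%:E <=
    \int[lebesgue_measure]_(t in D) (2 `^ (p - 1) *
      (rnorm (f t%:C) `^ p + b `^ p * rnorm (F (T t x)) `^ p))%:E)%E.
  apply: le_ge0_integral => t _; rewrite lee_fin ?powR_ge0 //.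
  by rewrite st_norm_PcalTcal_powR_le ?ltW.
apply: le_trans integrand_le _.
apply: le_trans; first apply: ge0_integral_combination_le.
- exact: measurable_itv.
- exact: powR_ge0.
- exact: powR_ge0.
- exact: measurable_rnorm_real_axis hol_f.
- by move=> t _; exact: powR_ge0.
- by move=> t _; exact: powR_ge0.
apply: lee_wpmul2l; first by rewrite lee_fin powR_ge0.
rewrite addeC leeD // -mulrA EFinM lee_wpmul2l ?lee_fin ?powR_ge0 //.
exact: admF.
Qed.
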